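(* Let $k\ge 2$ and let $I$ be a purified instance relative to $C_k$ such that the instance graph $F_{C_k}(I)$ is strongly connected. If $F_{C_k}(I)$ contains a directed simple cycle of length greater than $k$, then $\mathcal M_{C_k}(I)=\{\emptyset\}$ (in particular $I\not\vDash C_k$). Otherwise $\mathcal M_{C_k}(I)=\{\{(a_1,\dots,a_k)\}: (a_1,\dots,a_k)\in C_k^f(I)\}$, i.e. every frugal repair yields exactly one answer tuple (one $k$-cycle $a_1\to a_2\to\dots\to a_k\to a_1$ of $F_{C_k}(I)$), and every such $k$-cycle is the unique answer of some frugal repair.
   Context: For $k\ge2$, $C_k=R_1(\underline{x_1},x_2),\dots,R_k(\underline{x_k},x_1)$ with the first attribute of each atom the key; relations may be of consistent or inconsistent type. A repair of $I$ is a maximal subset of $I$ satisfying all key constraints (one tuple per key-group); $I\vDash C_k$ means $C_k(r)$ holds for every repair. $C_k^f(r)$ is the set of tuples $(a_1,\dots,a_k)$ with $R_i(a_i,a_{i+1})\in r$ for all $i$ (indices mod $k$). A repair $r$ is frugal if no repair $r'$ has $C_k^f(r')\subsetneq C_k^f(r)$, and $\mathcal M_{C_k}(I)=\{C_k^f(r): r$ frugal$\}$. $I$ is purified relative to $C_k$ if every tuple of each $R_i^I$ occurs in some tuple of $C_k^f(I)$. The instance graph $F_{C_k}(I)$ has the constants of $I$ as vertices and an edge $(a,b)$ for each tuple $R_i(a,b)\in I$; constants in positions of distinct variables are assumed distinct. *)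

From mathcomp Require Import all_boot.
Set Implicit Arguments. Unset Strict Implicit. Unset Printing Implicit Defensive.

(* Query C_k = R_0(x_0,x_1), ..., R_{k-1}(x_{k-1},x_0) (0-based, indices mod k).
   A fact R_i(a,b) is encoded as (i, a, b) : 'I_k * T * T.  The standing
   assumption that constants in positions of distinct variables are distinct
   is realised by tagging constants with their variable index: the constant a
   at position x_i is the vertex (i, a). *)
Definition fact (k : nat) (T : finType) := ('I_k * T * T)%type.

Definition frel k T (f : fact k T) : 'I_k := f.1.1.
Definition fkey k T (f : fact k T) : T := f.1.2.

Definition consistent k T (s : {set fact k T}) : Prop :=
  forall f g, f \in s -> g \in s -> frel f = frel g -> fkey f = fkey g -> f = g.

Definition repair k T (I r : {set fact k T}) : Prop :=
  [/\ r \subset I, consistent r &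
      forall r' : {set fact k T}, r \subset r' -> r' \subset I -> consistent r' -> r' = r].

Definition Cf k T (r : {set fact k T}) : {set {ffun 'I_k -> T}} :=
  [set t : {ffun 'I_k -> T} | [forall i : 'I_k, (i, t i, t (ordS i)) \in r]].

Definition query_true k T (r : {set fact k T}) : Prop := Cf r != set0.

Definition certain k T (I : {set fact k T}) : Prop :=
  forall r, repair I r -> query_true r.

Definition frugal k T (I r : {set fact k T}) : Prop :=
  repair I r /\ ~ (exists r' : {set fact k T}, repair I r' /\ Cf r' \proper Cf r).

Definition inM k T (I : {set fact k T}) (X : {set {ffun 'I_k -> T}}) : Prop :=
  exists r, frugal I r /\ X = Cf r.

Definition purified k T (I : {set fact k T}) : Prop :=
  forall f, f \in I -> exists2 t, t \in Cf I &
    t (frel f) = fkey f /\ t (ordS (frel f)) = f.2.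

Definition vertex k T (I : {set fact k T}) (u : 'I_k * T) : Prop :=
  exists f, f \in I /\ (u = (f.1.1, f.1.2) \/ u = (ordS f.1.1, f.2)).

Definition edge k T (I : {set fact k T}) : rel ('I_k * T) :=
  fun u v => (v.1 == ordS u.1) && ((u.1, u.2, v.2) \in I).

Definition strongly_connected k T (I : {set fact k T}) : Prop :=
  forall u v, vertex I u -> vertex I v -> connect (edge I) u v.

Definition has_long_cycle k T (I : {set fact k T}) : Prop :=
  exists p : seq ('I_k * T), [/\ uniq p, cycle (edge I) p & k < size p].

From Pilot Require Import Defs.
From mathcomp Require Import all_boot.
Set Implicit Arguments. Unset Strict Implicit. Unset Printing Implicit Defensive.

(* A fact R_i(a,b) is an edge (i,a) -> (i+1,b) of the instance graph, leaving
   its key vertex (i,a); a consistent set of facts leaves every vertex at most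
   once, and a repair is a consistent subset of I leaving every key of I
   ([repairE]).

   Building repairs: a consistent S included in I whose keys are reachable
   from all of I extends to a repair r in which every key of I still reaches
   a key of S along edges of r ([extend]; strong connectivity provides the
   hypothesis in [extend_sc]).  A tuple of C_k^f(r) is a closed walk on which
   r leaves no choice ([Cf_reach]), so it meets the keys of S ([Cf_meets]).
   Taking for S the k facts of a tuple t gives a repair whose only answer is
   t ([tuple_repair]); taking the edges of a simple cycle longer than k gives
   a repair without answers ([long_cycle_repair]).

   Answers of arbitrary repairs: following from each key the fact of r leaving
   it (purity keeps us on keys) eventually closes a simple cycle, whose length
   is a multiple of k; without long cycles its length is k and it spells out
   an answer ([repair_nonempty]). *)

Lemma periodic_point (U : finType) (f : U -> U) (x : U) :
  exists m n, [/\ 0 < n, iter n f (iter m f x) = iter m f x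
                & uniq (traject f (iter m f x) n)].
Proof.
have /trajectP[i lt_i_order Ei] := looping_order f x.
have Eorder : order f x = i + (order f x - i) by rewrite subnKC // ltnW.
exists i, (order f x - i); split; first by rewrite subn_gt0.
  by rewrite -iterD subnK ?Ei ?(ltnW lt_i_order).
move: (orbit_uniq f x); rewrite /orbit {1}Eorder trajectD.
by rewrite cat_uniq => /and3P[].
Qed.

Lemma fcycle_traject (U : eqType) (f : U -> U) y n :
  iter n f y = y -> fcycle f (traject f y n).
Proof.
case: n => [|n] //= Ey.
by rewrite rcons_path fpath_traject last_traject /= Ey eqxx.
Qed.

Lemma iter_modn (U : Type) (f : U -> U) y m n :
  iter m f y = y -> iter n f y = iter (n %% m) f y.
Proof.
move=> Ey; rewrite {1}(divn_eq n m) addnC iterD; congr (iter _ _ _).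
by elim: (n %/ m) => //= q IHq; rewrite mulSn iterD IHq Ey.
Qed.

Lemma connect_exit (U : finType) (e : rel U) (K : {pred U}) x c :
  x \notin K -> c \in K -> connect e x c ->
  exists u v, [/\ u \notin K, v \in K & e u v].
Proof.
move=> xK cK /connectP[p]; elim: p x xK => [|y p IHp] x xK /=.
  by move=> _ Ec; rewrite -Ec cK in xK.
case/andP=> exy py Ec; have [yK | yK] := boolP (y \in K); first by exists x, y.
exact: IHp yK py Ec.
Qed.

Section CyclicQuery.

Variables (k : nat) (T : finType).
Local Notation V := ('I_k * T)%type.
Local Notation F := (fact k T).

Lemma iter_ordS n (i : 'I_k) : val (iter n (@ordS k) i) = (i + n) %% k.
Proof.
elim: n => [|n IHn] /=; first by rewrite addn0 modn_small.
by rewrite -addn1 -modnDml IHn modn_mod modnDml addn1 addnS.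
Qed.

Lemma ordS_ind (P : 'I_k -> Prop) i0 :
  P i0 -> (forall j, P j -> P (ordS j)) -> forall j, P j.
Proof.
move=> P0 PS j.
have -> : j = iter (j + (k - i0)) (@ordS k) i0.
  apply: val_inj; rewrite iter_ordS addnCA subnKC ?(ltnW (ltn_ord i0)) //.
  by rewrite modnDr modn_small.
by elim: (_ + _) => //= n IHn; apply: PS.
Qed.

Lemma iter_ordS_fixed n (i : 'I_k) : iter n (@ordS k) i = i -> k %| n.
Proof.
move/(congr1 val); rewrite iter_ordS => Ei.
have : i + n = i + 0 %[mod k] by rewrite Ei addn0 modn_small.
by move/eqP; rewrite eqn_modDl mod0n.
Qed.

Definition keys (S : {set F}) : {set V} := [set f.1 | f in S].
Definition tgt (f : F) : V := (ordS f.1.1, f.2).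

Lemma consE (r : {set F}) :
  consistent r <-> {in r &, forall f g, f.1 = g.1 -> f = g}.
Proof.
split=> cons f g fr gr.
- by move=> Efg; apply: cons => //; rewrite /Defs.frel /fkey Efg.
- move=> Erel Ekey; apply: cons => //; move: Erel Ekey {fr gr}.
  by case: f => [[? ?] ?]; case: g => [[? ?] ?]; rewrite /Defs.frel /fkey /= => -> ->.
Qed.

Lemma consistentU1 (S : {set F}) g :
  consistent S -> g.1 \notin keys S -> consistent (g |: S).
Proof.
move=> cons gS; apply/consE=> a b; rewrite !inE.
case/predU1P=> [-> | aS] /predU1P[-> | bS] // Eab.
- by case/negP: gS; rewrite Eab imset_f.
- by case/negP: gS; rewrite -Eab imset_f.
- by move/consE: cons; apply.
Qed.

Lemma edgeP (E : {set F}) u v :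
  edge E u v = (v.1 == ordS u.1) && ((u, v.2) \in E).
Proof. by case: u. Qed.

Lemma edge_tgt (E : {set F}) f : f \in E -> edge E f.1 (tgt f).
Proof. by rewrite edgeP eqxx -surjective_pairing. Qed.

Lemma edge_fact (E : {set F}) u v :
  edge E u v -> (u, v.2) \in E /\ tgt (u, v.2) = v.
Proof. by case: v => j b; rewrite edgeP => /andP[/eqP /= -> ->]. Qed.

Lemma vertex_key (I : {set F}) f : f \in I -> vertex I f.1.
Proof. by move=> fI; exists f; split=> //; left; case: f {fI} => [[]]. Qed.

Lemma repairE (I r : {set F}) :
  repair I r <-> [/\ r \subset I, consistent r & keys I \subset keys r].
Proof.
split=> [[sub cons max] | [sub cons cover]].
  split=> //; apply/subsetP=> _ /imsetP[f fI ->]; apply/negPn/negP=> fr.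
  have Efr : f |: r = r.
    apply: max; [exact: subsetUr | by rewrite subUset sub1set fI |].
    exact: consistentU1.
  by case/negP: fr; rewrite -Efr imset_f // setU11.
split=> // r' sub_rr' sub_r'I /consE cons'.
apply/eqP; rewrite eqEsubset sub_rr' andbT; apply/subsetP=> f fr'.
have /imsetP[g gr Efg] : f.1 \in keys r.
  by apply: (subsetP cover); apply: imset_f; apply: (subsetP sub_r'I).
by rewrite (cons' f g fr' (subsetP sub_rr' g gr) Efg).
Qed.

Definition reaches (E A : {set F}) (K : {set V}) : Prop :=
  forall f, f \in A -> exists2 c, c \in K & connect (edge E) f.1 c.

Lemma reaches_tgt (E A : {set F}) (K : {set V}) g :
  g \in E -> tgt g \in K -> reaches E A (g.1 |: K) -> reaches E A K.
Proof.
move=> gE gK reach f fA; have [c] := reach f fA.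
case/setU1P=> [-> | cK] fc; last by exists c.
by exists (tgt g) => //; apply: connect_trans fc (connect1 (edge_tgt gE)).
Qed.

(* A consistent S whose keys are reachable from all of I extends to a
   repair in which all keys of I still reach keys of S: repeatedly add a
   fact entering keys S from an uncovered key. *)
Lemma extend (I S : {set F}) :
  S \subset I -> consistent S -> reaches I I (keys S) ->
  exists r, [/\ repair I r, S \subset r & reaches r I (keys S)].
Proof.
have [n] := ubnP #|keys I :\: keys S|.
elim: n S => // n IH S lt_n sub cons reach.
have [cover | /subsetPn[_ /imsetP[f fI ->] fS]] := boolP (keys I \subset keys S).
  exists S; split=> //; first exact/repairE.
  by move=> f fI; exists f.1; [apply: (subsetP cover); apply: imset_f |].
have [c cS fc] := reach f fI.
have [u [v [uS vS /edge_fact[gI Egv]]]] := connect_exit fS cS fc.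
set g : F := (u, v.2) in gI Egv.
have keysU : keys (g |: S) = u |: keys S by rewrite /keys imsetU1.
have uIS : u \in keys I :\: keys S by rewrite inE uS (imset_f _ gI).
have [r [rep sub_r reach_r]] :
    exists r, [/\ repair I r, g |: S \subset r & reaches r I (keys (g |: S))].
  apply: IH; [| by rewrite subUset sub1set gI | exact: consistentU1 |].
    rewrite keysU setUC -setDDl -ltnS (leq_trans _ lt_n) // ltnS.
    exact/proper_card/properD1.
  move=> h hI; have [c' c'S hc'] := reach h hI.
  by exists c' => //; rewrite keysU setU1r.
exists r; split=> //; first exact: subset_trans (subsetU1 g S) sub_r.
apply: (reaches_tgt (g := g)); first by apply: (subsetP sub_r); rewrite setU11.
  by rewrite Egv.
by rewrite -keysU.
Qed.

Lemma extend_sc (I S : {set F}) c0 :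
  strongly_connected I -> S \subset I -> consistent S -> c0 \in keys S ->
  exists r, [/\ repair I r, S \subset r & reaches r I (keys S)].
Proof.
move=> sc sub cons c0S; apply: extend => // f fI; exists c0 => //.
apply: sc; first exact: vertex_key.
by have /imsetP[g gS ->] := c0S; apply: vertex_key; apply: (subsetP sub).
Qed.

Lemma Cf_fact (r : {set F}) t i : t \in Cf r -> (i, t i, t (ordS i)) \in r.
Proof. by rewrite inE => /forallP. Qed.

Lemma Cf_mono (r I : {set F}) : r \subset I -> {subset Cf r <= Cf I}.
Proof.
by move=> sub t tr; rewrite inE; apply/forallP=> i; apply: (subsetP sub); apply: Cf_fact.
Qed.

Lemma Cf_edge (r : {set F}) t i v :
  consistent r -> t \in Cf r -> edge r (i, t i) v -> v = (ordS i, t (ordS i)).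
Proof.
move=> /consE cons tr /edge_fact[vr <-].
by have [->] := cons _ _ vr (Cf_fact i tr) erefl.
Qed.

Lemma Cf_reach (r : {set F}) t i v :
  consistent r -> t \in Cf r -> connect (edge r) (i, t i) v ->
  exists j, v = (j, t j).
Proof.
move=> cons tr /connectP[p]; elim: p i => [|w p IHp] i /=.
  by move=> _ ->; exists i.
by case/andP=> /(Cf_edge cons tr) -> /IHp.
Qed.

Lemma Cf_meets (I r : {set F}) (K : {set V}) (i0 : 'I_k) t :
  r \subset I -> consistent r -> reaches r I K -> t \in Cf r ->
  exists i, (i, t i) \in K.
Proof.
move=> sub cons reach tr; have [c cK] := reach _ (subsetP sub _ (Cf_fact i0 tr)).
by case/(Cf_reach cons tr) => j Ec; exists j; rewrite -Ec.
Qed.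

Lemma Cf_agree (r : {set F}) t t' i :
  consistent r -> t \in Cf r -> t' \in Cf r -> t i = t' i -> t = t'.
Proof.
move=> /consE cons tr t'r Ei; apply/ffunP.
apply: (@ordS_ind (fun j => t j = t' j) i Ei) => j Ej.
have := cons _ _ (Cf_fact j tr) (Cf_fact j t'r); rewrite /= Ej.
by case/(_ erefl).
Qed.

Definition tuple_facts (t : {ffun 'I_k -> T}) : {set F} :=
  [set (i, t i, t (ordS i)) | i : 'I_k].

Lemma tuple_repair (I : {set F}) (i0 : 'I_k) t :
  strongly_connected I -> t \in Cf I -> exists r, repair I r /\ Cf r = [set t].
Proof.
move=> sc tI.
have sub : tuple_facts t \subset I.
  by apply/subsetP=> _ /imsetP[i _ ->]; apply: Cf_fact.
have cons : consistent (tuple_facts t).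
  by apply/consE=> _ _ /imsetP[i _ ->] /imsetP[j _ ->] [->].
have key0 : (i0, t i0) \in keys (tuple_facts t).
  by apply/imsetP; exists (i0, t i0, t (ordS i0)); rewrite ?imset_f.
have [r [rep sub_r reach]] := extend_sc sc sub cons key0.
have /repairE[rI cons_r _] := rep.
have tr : t \in Cf r.
  by rewrite inE; apply/forallP=> i; apply: (subsetP sub_r); apply: imset_f.
exists r; split=> //; apply/setP=> t'; rewrite inE.
apply/idP/eqP=> [t'r | ->] //.
have [i /imsetP[_ /imsetP[j _ ->] [Eij Et]]] := Cf_meets i0 rI cons_r reach t'r.
by apply: (Cf_agree (i := i) cons_r t'r tr); rewrite Et Eij.
Qed.

(* A simple cycle longer than k yields a repair without answers: an answer
   would run through the whole cycle, visiting at most k vertices. *)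
Lemma long_cycle_repair (I : {set F}) p :
  strongly_connected I -> uniq p -> cycle (edge I) p -> k < size p ->
  exists r, repair I r /\ Cf r = set0.
Proof.
move=> sc p_uniq p_cycle p_long.
have [x0 x0p] : exists x0, x0 \in p.
  by case: p p_long {p_uniq p_cycle} => // x p _; exists x; apply: mem_head.
pose S := [set ((u, (next p u).2) : F) | u in p].
have edge_next u : u \in p -> edge I u (next p u) := next_cycle p_cycle.
have sub : S \subset I.
  by apply/subsetP=> _ /imsetP[u up ->]; have [] := edge_fact (edge_next u up).
have cons : consistent S.
  by apply/consE=> _ _ /imsetP[u _ ->] /imsetP[v _ ->] /= ->.
have keysS : keys S \subset p by apply/subsetP=> _ /imsetP[_ /imsetP[u up ->] ->].
have key0 : x0 \in keys S.
  by apply/imsetP; exists (x0, (next p x0).2); rewrite ?imset_f.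
have [r [rep sub_r reach]] := extend_sc sc sub cons key0.
have /repairE[rI cons_r _] := rep.
have r_cycle : cycle (edge r) p.
  apply: (cycle_from_next p_uniq) => u up.
  move: (edge_next u up); rewrite !edgeP => /andP[-> _] /=.
  by apply: (subsetP sub_r); apply: imset_f.
exists r; split=> //; apply/setP=> t; rewrite in_set0; apply/negbTE/negP=> tr.
have [i /(subsetP keysS) ip] := Cf_meets x0.1 rI cons_r reach tr.
have on_t y : y \in p -> y \in [seq (j, t j) | j <- enum 'I_k].
  move=> yp; have [j ->] := Cf_reach cons_r tr (connect_cycle r_cycle ip yp).
  by apply: map_f; rewrite mem_enum.
have := uniq_leq_size p_uniq on_t.
by rewrite size_map size_enum_ord leqNgt p_long.
Qed.

Lemma purified_tgt (I : {set F}) f : purified I -> f \in I -> tgt f \in keys I.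
Proof.
move=> pur fI; have [t tI [_ Et2]] := pur f fI.
apply/imsetP; exists (ordS f.1.1, t (ordS f.1.1), t (ordS (ordS f.1.1))).
  exact: Cf_fact.
by rewrite /tgt /= -Et2.
Qed.

Section RepairSuccessor.

Variables (I r : {set F}).
Hypotheses (pur : purified I) (rep : repair I r).

Definition succ (u : V) : V :=
  if [pick g in r | g.1 == u] is Some g then tgt g else u.

Lemma succ_key u : u \in keys I ->
  [/\ (u, (succ u).2) \in r, (succ u).1 = ordS u.1 & succ u \in keys I].
Proof.
have /repairE[rI _ cover] := rep.
move=> /(subsetP cover)/imsetP[g gr ->].
rewrite /succ; case: pickP => [h /andP[hr /eqP <-] | /(_ g)]; last first.
  by rewrite gr eqxx.
by rewrite /= -surjective_pairing; split=> //; apply: purified_tgt (subsetP rI h hr).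
Qed.

Lemma succ_edge u : u \in keys I -> edge I u (succ u).
Proof.
have /repairE[rI _ _] := rep.
by case/succ_key=> ur Eu _; rewrite edgeP Eu eqxx (subsetP rI _ ur).
Qed.

Lemma iter_succ_key n u : u \in keys I -> iter n succ u \in keys I.
Proof. by move=> uI; elim: n => //= n /succ_key[]. Qed.

Lemma iter_succ_layer n u :
  u \in keys I -> (iter n succ u).1 = iter n (@ordS k) u.1.
Proof.
move=> uI; elim: n => //= n IHn.
by have [_ -> _] := succ_key (iter_succ_key n uI); rewrite IHn.
Qed.

(* A key returning to itself after k successor steps spells out an answer:
   the vertex visited at layer l gives its l-th component. *)
Lemma succ_period_tuple y :
  y \in keys I -> iter k succ y = y -> exists t, t \in Cf r.
Proof.
move=> yI Ey; pose d (l : 'I_k) := l + (k - y.1).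
have layer_d l : (iter (d l) succ y).1 = l.
  apply: val_inj; rewrite iter_succ_layer // iter_ordS addnCA.
  by rewrite subnKC ?(ltnW (ltn_ord y.1)) // modnDr modn_small.
pose t := [ffun l => (iter (d l) succ y).2].
exists t; rewrite inE; apply/forallP=> l.
have Ez : iter (d l) succ y = (l, t l).
  by rewrite ffunE [LHS]surjective_pairing layer_d.
have Esucc : succ (iter (d l) succ y) = iter (d (ordS l)) succ y.
  rewrite -iterS (iter_modn _ Ey) [in RHS](iter_modn _ Ey); congr (iter _ _ _).
  by rewrite /d -addSn /= modnDml.
have [zr _ _] := succ_key (iter_succ_key (d l) yI).
by rewrite [t (ordS l)]ffunE -Esucc -Ez.
Qed.

Lemma repair_nonempty : I != set0 -> ~ has_long_cycle I -> exists t, t \in Cf r.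
Proof.
move=> /set0Pn[f fI] no_long.
have [m [P [P_gt0 EP P_uniq]]] := periodic_point succ f.1.
set y := iter m succ f.1 in EP P_uniq.
have yI : y \in keys I by apply: iter_succ_key; apply: imset_f.
have P_cycle : cycle (edge I) (traject succ y P).
  apply: (sub_in_cycle (P := mem (keys I)) _ _ (fcycle_traject EP)).
    by move=> u v uI _ /eqP <-; apply: succ_edge.
  by apply/allP=> _ /trajectP[n _ ->]; apply: iter_succ_key.
have P_le_k : P <= k.
  rewrite leqNgt; apply/negP=> lt_kP; apply: no_long.
  by exists (traject succ y P); rewrite size_traject.
have k_dvd_P : k %| P.
  by apply: (iter_ordS_fixed (i := y.1)); rewrite -iter_succ_layer // EP.
have EPk : P = k by apply/eqP; rewrite eqn_leq P_le_k dvdn_leq.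
by rewrite EPk in EP; apply: succ_period_tuple yI EP.
Qed.

End RepairSuccessor.

Lemma inM_empty (I r0 : {set F}) :
  repair I r0 -> Cf r0 = set0 -> forall X, inM I X <-> X = set0.
Proof.
move=> rep0 Cf0 X; split=> [[r [[rep not_min] ->]] | ->].
  apply/eqP/negPn/negP=> /set0Pn[t tr]; apply: not_min; exists r0; split=> //.
  by rewrite Cf0; apply/properP; split; [apply: sub0set | exists t; rewrite ?in_set0].
exists r0; split=> //; split=> // [[r [_ /properP[_ [t]]]]].
by rewrite Cf0 in_set0.
Qed.

Lemma inM_singletons (I : {set F}) :
  (forall r, repair I r -> Cf r != set0) ->
  (forall t, t \in Cf I -> exists r, repair I r /\ Cf r = [set t]) ->
  forall X, inM I X <-> exists2 t, t \in Cf I & X = [set t].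
Proof.
move=> nonempty single X; split=> [[r [[rep not_min] ->]] | [t tI ->]].
  have /set0Pn[t tr] := nonempty r rep; have /repairE[rI _ _] := rep.
  have tI := Cf_mono rI tr; exists t => //.
  have [r' [rep' Cr']] := single t tI.
  apply/eqP/negPn/negP=> neq; apply: not_min; exists r'; split=> //.
  by rewrite Cr' properEneq eq_sym neq sub1set tr.
have [r [rep Cr]] := single t tI; exists r; split=> //; split=> //.
case=> r' [rep']; rewrite Cr properEneq subset1 => /andP[neq /orP[/eqP E | E0]].
  by rewrite E eqxx in neq.
by rewrite (negPf (nonempty r' rep')) in E0.
Qed.

End CyclicQuery.

Theorem lemma4p3 (k : nat) (T : finType) (I : {set fact k T}) :
  2 <= k -> I != set0 -> purified I -> strongly_connected I ->
  (has_long_cycle I ->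
     (forall X, inM I X <-> X = set0) /\ ~ certain I) /\
  (~ has_long_cycle I ->
     forall X, inM I X <-> exists2 t, t \in Cf I & X = [set t]).
Proof.
move=> k_ge2 I_n0 pur sc; have i0 : 'I_k := Ordinal (ltnW k_ge2).
split=> [[p [p_uniq p_cycle p_long]] | no_long].
  have [r0 [rep0 Cf0]] := long_cycle_repair sc p_uniq p_cycle p_long.
  split; first exact: inM_empty rep0 Cf0.
  by move=> cert; move: (cert r0 rep0); rewrite /query_true Cf0 eqxx.
apply: inM_singletons => [r rep | t tI]; last exact: (tuple_repair i0 sc tI).
by have [t tr] := repair_nonempty pur rep I_n0 no_long; apply/set0Pn; exists t.
Qed.
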